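(* Let $\langle (x_n,y_n)\rangle_{n\in\mathbb{N}}$ be the solutions in $\mathbb{N}^2$ of $x^2-19\,y^2=1$, indexed so that $y_0<y_1<\cdots$ (so $39\mid y_k$ for every $k$). Let $n=2^m h$ with $m>0$ and $h$ odd. If $y_n/39$ is representable, then $y_h/39$ is representable.
   Context: $(x_0,y_0)=(1,0)$, $(x_1,y_1)=(170,39)$, $x_n+y_n\sqrt{19}=(170+39\sqrt{19})^n$. A non-negative integer $N$ is called representable if $N=w^2+w\,t+5\,t^2$ for some $w,t\in\mathbb{Z}$ (the norm form of the ring of integers $\mathbb{Z}[\tfrac{1+\sqrt{-19}}{2}]$). *)

From Stdlib Require Import ZArith.
Open Scope Z_scope.

(* (x_n, y_n) with x_n + y_n sqrt 19 = (170 + 39 sqrt 19)^n: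
   multiplying by 170 + 39 sqrt 19 gives
   x_{n+1} = 170 x_n + 741 y_n,  y_{n+1} = 39 x_n + 170 y_n  (741 = 19*39). *)
Fixpoint pell (n : nat) : Z * Z :=
  match n with
  | O => (1, 0)
  | S k => let (x, y) := pell k in (170 * x + 741 * y, 39 * x + 170 * y)
  end.

Definition pell_x (n : nat) : Z := fst (pell n).
Definition pell_y (n : nat) : Z := snd (pell n).

(* N is representable by the norm form w^2 + w t + 5 t^2 of Z[(1+sqrt(-19))/2]. *)
Definition representable (N : Z) : Prop :=
  0 <= N /\ exists w t : Z, N = w * w + w * t + 5 * t * t.

From Stdlib Require Import ZArith Znumtheory Lia Zwf.
Open Scope Z_scope.

(* The norm form f(w, t) = w^2 + w t + 5 t^2 of Z[(1 + sqrt(-19))/2] is the only reduced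
   binary quadratic form of discriminant -19 (class number one). Hence every prime p dividing
   f(w, t) either divides both w and t, or is itself a value of f, and then f(w, t) / p is again
   a value of f. Peeling off the prime factors of A one at a time shows that a positive A coprime
   to B is a value of f whenever A B is.
   For odd h, y_(2^m h) = y_h K with K = 2^m x_h x_(2h) ... x_(2^(m-1) h) coprime to y_h, because
   y_(2n) = 2 x_n y_n, gcd(x_n, y_n) = 1 and y_h is odd. So y_(2^m h) / 39 = (y_h / 39) K with
   coprime factors, and the descent applies. *)

Definition norm19 (w t : Z) : Z := w * w + w * t + 5 * t * t.

Lemma norm19_4 w t : 4 * norm19 w t = (2 * w + t) * (2 * w + t) + 19 * t * t.
Proof. unfold norm19; ring. Qed.

Lemma norm19_mul a b c d :
  norm19 a b * norm19 c d = norm19 (a * c - 5 * b * d) (a * d + b * c + b * d).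
Proof. unfold norm19; ring. Qed.

Lemma norm19_scale p w t : norm19 (p * w) (p * t) = p * p * norm19 w t.
Proof. unfold norm19; ring. Qed.

Lemma norm19_of_4mul M U T :
  4 * M = U * U + 19 * T * T -> exists w t, M = norm19 w t.
Proof.
  intros H.
  assert (HU : exists w, U = 2 * w + T).
  { destruct (Z.Even_or_Odd U) as [[u ->]|[u ->]], (Z.Even_or_Odd T) as [[s ->]|[s ->]];
      solve [exists (u - s); lia | exfalso; nia]. }
  destruct HU as [w ->]. exists w, T.
  pose proof (norm19_4 w T). lia.
Qed.

Lemma even_of_sum_sq19_16 X Y M :
  X * X + 19 * Y * Y = 16 * M -> (2 | X) /\ (2 | Y).
Proof.
  intros H.
  destruct (Z.Even_or_Odd X) as [[a ->]|[a ->]], (Z.Even_or_Odd Y) as [[b ->]|[b ->]].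
  - split; [exists a | exists b]; ring.
  - exfalso; nia.
  - exfalso; nia.
  - exfalso.
    destruct (Z.Even_or_Odd a) as [[k ->]|[k ->]], (Z.Even_or_Odd b) as [[l ->]|[l ->]]; nia.
Qed.

Lemma norm19_of_16sq_mul p M X Y :
  prime p -> 16 * p * p * M = X * X + 19 * Y * Y -> (p | Y) -> exists w t, M = norm19 w t.
Proof.
  intros Hp E [Y1 ->].
  pose proof (prime_ge_2 p Hp).
  assert (HX : (p | X * X)) by (exists (16 * p * M - 19 * Y1 * Y1 * p); nia).
  assert (HX1 : exists X1, X = X1 * p) by (destruct (prime_mult p Hp X X HX); auto).
  destruct HX1 as [X1 ->].
  assert (E1 : X1 * X1 + 19 * Y1 * Y1 = 16 * M)
    by (apply (Z.mul_cancel_l _ _ (p * p)); nia).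
  destruct (even_of_sum_sq19_16 _ _ _ E1) as [[X2 ->] [Y2 ->]].
  apply (norm19_of_4mul M X2 Y2). nia.
Qed.

Lemma prime_19 : prime 19.
Proof.
  apply prime_intro; [lia|]. intros n Hn. apply Zgcd_1_rel_prime.
  assert (Hgcd : forall k, (k <= 18)%nat -> k = 0%nat \/ Z.gcd (Z.of_nat k) 19 = 1).
  { intros k Hk. do 19 (destruct k as [|k]; [auto|]). lia. }
  destruct (Hgcd (Z.to_nat n)) as [H|H]; [lia|lia|now rewrite Z2Nat.id in H by lia].
Qed.

(* With u = 2w + t and U = 2a + b, (u U +- 19 t b)^2 + 19 (u b -+ U t)^2 = 16 p f(w, t), and unless
   p = 19 (ramified), p divides U t - u b or U t + u b; that identity is then divisible by p^2. *)
Lemma norm19_div_prime_value p a b w t :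
  prime p -> p = norm19 a b -> (p | norm19 w t) ->
  exists w' t', norm19 w t = p * norm19 w' t'.
Proof.
  intros Hp Hab [M HM].
  pose proof (prime_ge_2 p Hp).
  pose proof (norm19_4 w t) as HN. pose proof (norm19_4 a b) as HP.
  rewrite HM in HN. rewrite <- Hab in HP.
  set (u := 2 * w + t) in HN. set (U := 2 * a + b) in HP. clearbody u U.
  enough (HMv : exists w' t', M = norm19 w' t')
    by (destruct HMv as [w' [t' ->]]; exists w', t'; rewrite HM; ring).
  assert (Hd : (p | 19 * ((U * t - u * b) * (U * t + u * b))))
    by (exists (4 * U * U * M - 4 * u * u); nia).
  destruct (prime_mult p Hp _ _ Hd) as [H19|Hd'].
  - assert (p = 19) by (apply prime_div_prime; auto using prime_19). subst p.
    assert (Hu : (19 | u * u)) by (exists (4 * M - t * t); nia).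
    destruct (prime_mult 19 prime_19 u u Hu) as [[v ->]|[v ->]];
      apply (norm19_of_4mul M t v); nia.
  - destruct (prime_mult p Hp _ _ Hd') as [[k Hk]|[k Hk]].
    + apply (norm19_of_16sq_mul p M (u * U + 19 * t * b) (u * b - U * t) Hp); [nia|].
      exists (- k). lia.
    + apply (norm19_of_16sq_mul p M (u * U - 19 * t * b) (u * b + U * t) Hp); [nia|].
      exists k. lia.
Qed.

Lemma reduced_disc19 a b c :
  - a <= b < a -> a <= c -> b * b - 4 * a * c = -19 -> a = 1 /\ b = -1 /\ c = 5.
Proof.
  intros Hb Hc Hd.
  assert (Ha : a <= 2) by nia.
  assert (a = 1 \/ a = 2) as [->| ->] by nia.
  - assert (b = -1 \/ b = 0) as [->| ->] by lia; lia.
  - assert (b = -2 \/ b = -1 \/ b = 0 \/ b = 1) as [->|[->|[->| ->]]] by lia; lia.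
Qed.

(* Reduction theory: the substitution x -> x + k y moves b into [-a, a), and swapping x, y
   exchanges a and c; when c >= a the form is reduced, hence equal to f. *)
Lemma form_disc19_norm19 :
  forall a, 0 < a -> forall b c, b * b - 4 * a * c = -19 ->
  forall x y, exists w t, a * x * x + b * x * y + c * y * y = norm19 w t.
Proof.
  intros a; induction a as [a IH] using (well_founded_ind (Zwf_well_founded 0)).
  intros Ha b c Hd x y.
  set (k := (b + a) / (2 * a)).
  pose proof (Z.div_mod (b + a) (2 * a) ltac:(lia)) as Hk.
  pose proof (Z.mod_pos_bound (b + a) (2 * a) ltac:(lia)) as Hr.
  fold k in Hk. set (r := (b + a) mod (2 * a)) in *. clearbody k r.
  set (b' := b - 2 * k * a). set (c' := c - k * b + k * k * a).
  assert (Hd' : b' * b' - 4 * a * c' = -19) by (subst b' c'; nia).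
  assert (Hb' : - a <= b' < a) by (subst b'; nia).
  replace (a * x * x + b * x * y + c * y * y)
    with (a * (x + k * y) * (x + k * y) + b' * (x + k * y) * y + c' * y * y)
    by (subst b' c'; ring).
  clearbody b' c'.
  destruct (Z_lt_le_dec c' a) as [Hlt|Hge].
  - assert (Hc' : 0 < c') by nia.
    destruct (IH c' ltac:(unfold Zwf; lia) Hc' (- b') a ltac:(lia) y (- (x + k * y)))
      as [w [t Hwt]].
    exists w, t. rewrite <- Hwt. ring.
  - destruct (reduced_disc19 a b' c' Hb' Hge Hd') as [-> [-> ->]].
    exists (x + k * y), (- y). unfold norm19. ring.
Qed.

Lemma norm19_of_dvd_sq_add19 p s :
  prime p -> p <> 2 -> (p | s * s + 19) -> exists a b, p = norm19 a b.
Proof.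
  intros Hp Hp2 Hs.
  pose proof (prime_ge_2 p Hp).
  assert (Hpodd : exists q, p = 2 * q + 1).
  { destruct (Z.Even_or_Odd p) as [[q Hq]|Hq]; [|exact Hq].
    exfalso. apply Hp2. symmetry. apply prime_div_prime; [exact prime_2|exact Hp|exists q; lia]. }
  destruct Hpodd as [q Hq].
  assert (Hj : exists j, (p | 4 * (j * j + j + 5))).
  { destruct (Z.Even_or_Odd s) as [[j Hj]|[j Hj]].
    - exists (j + q). destruct Hs as [d Hd]. exists (d + 2 * s + p). subst s p. nia.
    - exists j. destruct Hs as [d Hd]. exists d. subst s. nia. }
  destruct Hj as [j Hj].
  assert (Hp4 : rel_prime p 4).
  { apply prime_rel_prime; [exact Hp|]. intros H4.
    replace 4 with (2 * 2) in H4 by ring.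
    destruct (prime_mult p Hp 2 2 H4) as [H2|H2];
      apply Hp2, prime_div_prime; auto using prime_2. }
  destruct (Gauss _ _ _ Hj Hp4) as [c Hc].
  destruct (form_disc19_norm19 p ltac:(lia) (2 * j + 1) c ltac:(nia) 1 0) as [a [b Hab]].
  exists a, b. rewrite <- Hab. ring.
Qed.

Lemma two_dvd_norm19 w t : (2 | norm19 w t) -> (2 | t).
Proof.
  intros [k Hk]. unfold norm19 in Hk.
  destruct (Z.Even_or_Odd t) as [[r ->]|[r ->]]; [exists r; ring|].
  exfalso. destruct (Z.Even_or_Odd w) as [[q ->]|[q ->]]; nia.
Qed.

(* -19 is a square modulo p: with v t = 1 (mod p), ((2 w + t) v)^2 + 19 = v^2 4 f(w, t). *)
Lemma prime_dvd_norm19_value p w t :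
  prime p -> (p | norm19 w t) -> ~ (p | t) -> exists a b, p = norm19 a b.
Proof.
  intros Hp Hd Ht.
  destruct (Z.eq_dec p 2) as [->|Hp2]; [now exfalso; apply Ht, (two_dvd_norm19 w)|].
  destruct (rel_prime_bezout _ _ (prime_rel_prime p Hp t Ht)) as [u v Huv].
  apply (norm19_of_dvd_sq_add19 p ((2 * w + t) * v) Hp Hp2).
  destruct Hd as [M HM].
  exists (4 * v * v * M + 19 * u * (1 + v * t)).
  transitivity (v * v * (4 * norm19 w t) + 19 * (1 - v * t) * (1 + v * t)).
  - unfold norm19; ring.
  - replace (1 - v * t) with (u * p) by lia. rewrite HM. ring.
Qed.

Lemma exists_prime_divisor : forall a, 1 < a -> exists p, prime p /\ (p | a).
Proof.
  intros a; induction a as [a IH] using (well_founded_ind (Zwf_well_founded 0)). intros Ha.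
  destruct (prime_dec a) as [Hp|Hp]; [exists a; split; [exact Hp | apply Z.divide_refl]|].
  destruct (not_prime_divide a Ha Hp) as [d [Hd Hda]].
  destruct (IH d ltac:(unfold Zwf; lia) ltac:(lia)) as [p [Hpp Hpd]].
  exists p. split; [exact Hpp | eapply Z.divide_trans; eauto].
Qed.

Lemma norm19_coprime_factor :
  forall A, 0 < A -> forall B w t, rel_prime A B -> A * B = norm19 w t ->
  exists a b, A = norm19 a b.
Proof.
  intros A; induction A as [A IH] using (well_founded_ind (Zwf_well_founded 0)).
  intros HA B w t Hcop HAB.
  destruct (Z.eq_dec A 1) as [->|HA_ne1]; [now exists 1, 0|].
  destruct (exists_prime_divisor A ltac:(lia)) as [p [Hp [A1 HA1p]]].
  pose proof (prime_ge_2 p Hp).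
  assert (HA1_range : 0 < A1 < A) by nia.
  assert (HpB : ~ (p | B)).
  { intros HB. destruct Hcop as [_ _ Hg].
    assert (H1 : (p | 1)) by (apply Hg; [exists A1; exact HA1p | exact HB]).
    apply Z.divide_pos_le in H1; lia. }
  assert (HpN : (p | norm19 w t)) by (exists (A1 * B); lia).
  destruct (Zdivide_dec p t) as [[t1 ->]|Ht].
  - assert (Hw : (p | w * w)) by (exists (A1 * B - t1 * (w + 5 * t1 * p)); unfold norm19 in *; nia).
    assert (Hw1 : exists w1, w = w1 * p) by (destruct (prime_mult p Hp w w Hw); auto).
    destruct Hw1 as [w1 ->].
    rewrite (Z.mul_comm w1 p), (Z.mul_comm t1 p), norm19_scale in HAB.
    assert (HpA1B : (p | A1 * B)) by (exists (norm19 w1 t1); nia).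
    destruct (prime_mult p Hp _ _ HpA1B) as [[A2 HA2]|HB]; [|contradiction].
    assert (HA2pos : 0 < A2) by nia.
    destruct (IH A2 ltac:(unfold Zwf; nia) HA2pos B w1 t1) as [a2 [b2 Ha2]].
    + apply (rel_prime_div _ _ _ Hcop). exists (p * p). lia.
    + apply (Z.mul_cancel_l _ _ (p * p)); [nia|]. rewrite <- HAB, HA1p, HA2. ring.
    + exists (p * a2), (p * b2). rewrite norm19_scale, <- Ha2, HA1p, HA2. ring.
  - destruct (prime_dvd_norm19_value p w t Hp HpN Ht) as [a [b Hab]].
    destruct (norm19_div_prime_value p a b w t Hp Hab HpN) as [w' [t' E]].
    destruct (IH A1 ltac:(unfold Zwf; lia) ltac:(lia) B w' t') as [a1 [b1 Ha1]].
    + apply (rel_prime_div _ _ _ Hcop). exists p. lia.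
    + apply (Z.mul_cancel_l _ _ p); [lia|]. rewrite <- E, <- HAB, HA1p. ring.
    + rewrite HA1p, Ha1, Hab, norm19_mul. eauto.
Qed.

Lemma pell_S n :
  pell_x (S n) = 170 * pell_x n + 741 * pell_y n /\
  pell_y (S n) = 39 * pell_x n + 170 * pell_y n.
Proof. unfold pell_x, pell_y; simpl; destruct (pell n); auto. Qed.

Lemma pell_add a b :
  pell_x (a + b) = pell_x a * pell_x b + 19 * pell_y a * pell_y b /\
  pell_y (a + b) = pell_x a * pell_y b + pell_y a * pell_x b.
Proof.
  induction a as [|a IH]; cbn [Nat.add].
  - change (pell_x 0) with 1; change (pell_y 0) with 0. split; ring.
  - destruct (pell_S (a + b)) as [-> ->], (pell_S a) as [-> ->], IH as [-> ->].
    split; ring.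
Qed.

Lemma pell_eq n : pell_x n * pell_x n - 19 * pell_y n * pell_y n = 1.
Proof.
  induction n as [|n IH]; [reflexivity|].
  destruct (pell_S n) as [-> ->]. nia.
Qed.

Lemma pell_nonneg n : 1 <= pell_x n /\ 0 <= pell_y n.
Proof.
  induction n as [|n IH]; [split; cbv; discriminate|].
  destruct (pell_S n) as [-> ->]. lia.
Qed.

Lemma pell_y_pos n : (0 < n)%nat -> 0 < pell_y n.
Proof.
  destruct n as [|n]; [lia|]. intros _.
  destruct (pell_S n) as [_ ->]. pose proof (pell_nonneg n). lia.
Qed.

Lemma pell_y_39 n : (39 | pell_y n).
Proof.
  induction n as [|n [k Hk]]; [exists 0; reflexivity|].
  destruct (pell_S n) as [_ ->]. rewrite Hk. exists (pell_x n + 170 * k). ring.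
Qed.

Lemma pell_y_odd n : Z.odd (pell_y n) = Nat.odd n.
Proof.
  enough (H : Z.odd (pell_y n) = Nat.odd n /\ Z.odd (pell_x n) = negb (Nat.odd n)) by apply H.
  induction n as [|n IH]; [split; reflexivity|].
  destruct (pell_S n) as [-> ->].
  rewrite !Z.odd_add, !Z.odd_mul, Nat.odd_succ, <- Nat.negb_odd. simpl.
  destruct IH as [-> ->]. destruct (Nat.odd n); split; reflexivity.
Qed.

Lemma rel_prime_pell_y_x n : rel_prime (pell_y n) (pell_x n).
Proof.
  apply bezout_rel_prime. exists (- 19 * pell_y n) (pell_x n). pose proof (pell_eq n). lia.
Qed.

Lemma pell_y_pow2_mul h m :
  Nat.odd h = true -> exists K, pell_y (2 ^ m * h) = pell_y h * K /\ rel_prime (pell_y h) K.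
Proof.
  intros Hh. induction m as [|m [K [HK Hcop]]].
  - exists 1. rewrite Nat.pow_0_r, Nat.mul_1_l. split; [ring | apply rel_prime_sym, rel_prime_1].
  - set (n := (2 ^ m * h)%nat) in *.
    replace (2 ^ S m * h)%nat with (n + n)%nat by (subst n; simpl; lia).
    exists (2 * pell_x n * K). split.
    + rewrite (proj2 (pell_add n n)), HK. ring.
    + apply rel_prime_mult; [apply rel_prime_mult|exact Hcop].
      * apply bezout_rel_prime.
        pose proof (pell_y_odd h) as Ho. rewrite Hh in Ho.
        destruct (Z.Even_or_Odd (pell_y h)) as [[q Hq]|[q Hq]].
        -- rewrite Hq, Z.odd_mul in Ho. discriminate.
        -- exists 1 (- q). lia.
      * apply (rel_prime_div _ _ _ (rel_prime_pell_y_x n)). exists K. rewrite HK. ring.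
Qed.

Theorem lemma3 (m h : nat) (hm : (0 < m)%nat) (hh : Nat.odd h = true) :
  representable (pell_y (2 ^ m * h)%nat / 39) ->
  representable (pell_y h / 39).
Proof.
  intros [_ [w [t Hwt]]].
  destruct (pell_y_pow2_mul h m hh) as [K [HK Hcop]].
  destruct (pell_y_39 h) as [j Hj].
  assert (Hjpos : 0 < j).
  { pose proof (pell_y_pos h ltac:(destruct h; [discriminate | lia])). lia. }
  rewrite HK, Hj, <- Z.mul_assoc, (Z.mul_comm 39), Z.mul_assoc, Z.div_mul in Hwt by lia.
  rewrite Hj, Z.div_mul by lia.
  split; [lia|].
  apply (norm19_coprime_factor j Hjpos K w t); [|exact Hwt].
  apply (rel_prime_div _ _ _ Hcop). exists 39. lia.
Qed.
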